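(* In $U(gl(m|n+1))$, each $\tau_k$ ($k\ge0$) can be expressed as a polynomial in the Casimir elements $I_j$ and $\hat I_j$ with $j\le k$, and each $\sigma_\ell$ ($\ell\ge0$) can be expressed as a polynomial in the Casimir elements $I_j$ and $\hat I_j$ with $j\le\ell+2$.
   Context: Over $\mathbb{C}$, $N=m+n+1$, parity $(p)=0$ for $1\le p\le m$, $(p)=1$ for $m<p\le N$. $gl(m|n+1)$ has homogeneous basis $E_{pq}$ ($1\le p,q\le N$) of parity $(p)+(q)$ with graded bracket $[E_{pq},E_{rs}]=\delta_{qr}E_{ps}-(-1)^{((p)+(q))((r)+(s))}\delta_{ps}E_{rq}$; $gl(m|n)$ is the subalgebra spanned by $E_{pq}$ with $p,q\le m+n$. Let $\mathcal B^p_{\ q}=(-1)^{(p)}E_{pq}$ ($1\le p,q\le N$) and let $\mathcal A$ be its upper-left $(m+n)\times(m+n)$ submatrix, $\mathcal A^p_{\ q}=(-1)^{(p)}E_{pq}$ ($1\le p,q\le m+n$). Powers: $(X^k)^p_{\ q}=\sum_rX^p_{\ r}(X^{k-1})^r_{\ q}$ (sum over the index range of $X$), $X^0$ the identity. Define $\tau_k=(\mathcal B^k)^N_{\ N}$, $\sigma_\ell=\sum_{p,q=1}^{m+n}\mathcal B^N_{\ p}(\mathcal A^\ell)^p_{\ q}\mathcal B^q_{\ N}$, and the Casimir elements $\hat I_k=\sum_{p=1}^N(-1)^{(p)}(\mathcal B^k)^p_{\ p}$ of $gl(m|n+1)$ and $I_k=\sum_{p=1}^{m+n}(-1)^{(p)}(\mathcal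 A^k)^p_{\ p}$ of $gl(m|n)$. Polynomials have complex coefficients (which may depend on $m,n$). *)

From HB Require Import structures.
From mathcomp Require Import all_boot all_order all_algebra.
From mathcomp Require Import Rstruct.
From mathcomp Require Import complex.
From mathcomp Require Import mpoly.
Set Implicit Arguments. Unset Strict Implicit. Unset Printing Implicit Defensive.
Import Order.TTheory GRing.Theory Num.Theory.
Local Open Scope ring_scope.

Definition Cplx : fieldType := complex Rdefinitions.R.

(* Parity of a (0-based) index p of 'I_N: even for p < m, odd for p >= m.
   (0-based p corresponds to the 1-based index p+1 of the paper.) *)
Definition par (m : nat) {N : nat} (p : 'I_N) : nat := (m <= p)%N.

Section GL.
Variables (m n : nat) (A : algType Cplx).
Local Notation N := (m + n).+1.

(* e p q plays the role of the image of E_{pq} in an associative C-algebra A;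
   gl_rel says that e satisfies the defining relations of U(gl(m|n+1)):
   E_pq E_rs - (-1)^{((p)+(q))((r)+(s))} E_rs E_pq = [E_pq, E_rs]. *)
Definition gl_rel (e : 'I_N -> 'I_N -> A) : Prop :=
  forall p q r s : 'I_N,
    let sg : A := (-1) ^+ ((par m p + par m q) * (par m r + par m s)) in
    e p q * e r s - sg * (e r s * e p q)
    = (q == r)%:R * e p s - sg * ((p == s)%:R * e r q).

Definition mxpow {K : nat} (X : 'M[A]_K) (k : nat) : 'M[A]_K :=
  iter k (mulmx X) 1%:M.

Variable e : 'I_N -> 'I_N -> A.

Definition Bmat : 'M[A]_N := \matrix_(p, q) ((-1) ^+ par m p * e p q).

Definition widenN (p : 'I_(m + n)) : 'I_N := widen_ord (leqnSn _) p.

Definition Amat : 'M[A]_(m + n) := \matrix_(p, q) Bmat (widenN p) (widenN q).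

Definition tau (k : nat) : A := mxpow Bmat k ord_max ord_max.

Definition sigma (l : nat) : A :=
  \sum_(p < m + n) \sum_(q < m + n)
     Bmat ord_max (widenN p) * mxpow Amat l p q * Bmat (widenN q) ord_max.

(* Casimirs of gl(m|n+1) and gl(m|n) *)
Definition Ihat (k : nat) : A :=
  \sum_(p < N) (-1) ^+ par m p * mxpow Bmat k p p.
Definition Icas (k : nat) : A :=
  \sum_(p < m + n) (-1) ^+ par m p * mxpow Amat k p p.

Definition casvars (K : nat) (i : 'I_(K + K)) : A :=
  match split i with inl j => Icas j | inr j => Ihat j end.
End GL.

(* Evaluation of a commutative polynomial P in K variables at x : 'I_K -> A
   (A possibly noncommutative; used only at pairwise commuting values):
   sum over monomials of coefficient *: x_0^{a_0} ... x_{K-1}^{a_{K-1}} *)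
Definition mpeval (A : algType Cplx) (K : nat) (P : {mpoly Cplx[K]})
    (x : 'I_K -> A) : A :=
  \sum_(mo <- msupp P) P@_mo *: \prod_(i < K) x i ^+ mo i.

(* The entries of every power B^k satisfy the same graded commutation relations
   with B_pq as the entries of B, because these relations survive matrix
   products.  Taking supertraces, each Ihat_k commutes with every E_pq and each
   I_k with every E_pq, p, q <= m + n; so the Casimirs commute pairwise and
   evaluating commutative polynomials at them is multiplicative.

   Let b be the last column of B and set
   kappa(a, i) = sum_p (-1)^(p) (A^a b)_p (B^i)^N_p.  Expanding B^k along its
   last row and column gives  Ihat_k - I_k + tau_k = sum_(a < k) kappa(a, k-1-a);
   commuting B^N_p past tau_i gives
   kappa(a, i+1) = kappa(a+1, i) + kappa(a, 1) tau_i - kappa(a, i);  and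
   commuting B^N_p past (B^k)^p_N expresses
   sum_(a < k) kappa(a, 1) tau_(k-1-a) + tau_(k+1) through tau_k, tau_1, I_k.
   By induction on k, modulo polynomials in the Casimirs every kappa(a, i) with
   a + i = k equals kappa(k-1, 1), and the two identities then determine
   (k+1) tau_(k+1).  Finally sigma_l is read off from
   tau_(l+2) = tau_1 tau_(l+1) + sum_(a <= l) sigma_a tau_(l-a). *)

From HB Require Import structures.
From mathcomp Require Import all_boot all_order all_algebra.
From mathcomp Require Import Rstruct complex mpoly.
From mathcomp Require Import ring zify bigenough.
Import BigEnough.
Set Implicit Arguments. Unset Strict Implicit. Unset Printing Implicit Defensive.
Import Order.TTheory GRing.Theory Num.Theory.
Local Open Scope ring_scope.
Local Notation sg b := ((-1) ^+ (nat_of_bool b) : Cplx).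

Lemma mulr_sign_scale (A : algType Cplx) k (x : A) : (-1) ^+ k * x = ((-1) ^+ k : Cplx) *: x.
Proof. by rewrite -[in RHS]mulr_algl -in_algE rmorph_sign. Qed.

Lemma mulr_nat_scale (A : algType Cplx) k (x : A) : k%:R * x = (k%:R : Cplx) *: x.
Proof. by rewrite mulr_natl scaler_nat. Qed.

Lemma big_scale_delta (V : lmodType Cplx) K (F : 'I_K -> V) (c : 'I_K -> Cplx) a :
  \sum_t ((a == t)%:R * c t) *: F t = c a *: F a.
Proof.
rewrite (bigD1 a) //= eqxx mul1r big1 ?addr0 // => t /negbTE.
by rewrite eq_sym => ->; rewrite mul0r scale0r.
Qed.

Section Covariance.
Variables (A : algType Cplx) (K : nat) (pi : 'I_K -> bool).

Definition swap_parity (p q r s : 'I_K) := (pi p (+) pi q) && (pi r (+) pi s).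

(* The commutation relation of B_pq with the entries of B, asked of an arbitrary
   matrix X in place of B. *)
Definition covariant (Z : A) (p q : 'I_K) (X : 'M[A]_K) :=
  forall r s, Z * X r s = sg (swap_parity p q r s) *: (X r s * Z)
     + ((q == r)%:R * sg (pi r)) *: X p s
     - ((p == s)%:R * sg (swap_parity p q r s (+) pi p)) *: X r q.

Definition supertr (X : 'M[A]_K) : A := \sum_t sg (pi t) *: X t t.

Lemma covariant1 Z p q : covariant Z p q 1%:M.
Proof.
move=> r s; rewrite !mxE /swap_parity [r == q]eq_sym.
have [<-|_] := eqVneq r s; rewrite ?addbb ?andbF.
  have [<-|_] := eqVneq p r; have [_|_] := eqVneq q p;
  by rewrite ?mulr1n ?mulr0n ?mul1r ?mul0r ?mulr1 ?scale0r ?scaler0 ?scale1r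
             ?expr0 ?subrr ?addr0 ?subr0 ?addrK.
have [<-|_] := eqVneq q r; have [->|_] := eqVneq p s;
  rewrite ?mulr1n ?mulr0n ?mul1r ?mul0r ?mulr0 ?scale0r ?scaler0 ?add0r ?subrr ?oppr0 //.
by rewrite [pi q (+) _]addbC andbb addbAC addbb /= subrr.
Qed.

Lemma covariantM Z p q X Y :
  covariant Z p q X -> covariant Z p q Y -> covariant Z p q (X *m Y).
Proof.
move=> cX cY r s.
have E t : Z * (X r t * Y t s) =
    sg (swap_parity p q r s) *: (X r t * Y t s * Z)
  + ((q == t)%:R * (sg (swap_parity p q r t) * sg (pi t))) *: (X r t * Y p s)
  - ((p == s)%:R * sg (swap_parity p q r s (+) pi p)) *: (X r t * Y t q)
  + ((q == r)%:R * sg (pi r)) *: (X p t * Y t s)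
  - ((p == t)%:R * sg (swap_parity p q r t (+) pi p)) *: (X r q * Y t s).
  rewrite mulrA cX !mulrDl !mulNr -!scalerAl -!mulrA cY.
  rewrite !mulrDr !mulrN -!scalerAr !scalerDr !scalerN !scalerA !mulrA.
  congr (_ *: _ + _ *: _ - _ *: _ + _ - _).
  - by rewrite -signr_addb /swap_parity;
      case: (pi p); case: (pi q); case: (pi r); case: (pi t); case: (pi s).
  - by rewrite [_ * (q == t)%:R]mulrC.
  - rewrite mulrAC -signr_addb mulrC; congr (_ * (_ ^+ nat_of_bool _)).
    by rewrite /swap_parity;
      case: (pi p); case: (pi q); case: (pi r); case: (pi t); case: (pi s).
rewrite !mxE mulr_sumr (eq_bigr _ (fun t _ => E t)) !big_split /= !sumrN.
rewrite -!scaler_sumr -mulr_suml big_scale_delta.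
rewrite (big_scale_delta (fun t => X r q * Y t s)).
have -> : sg (swap_parity p q r q) * sg (pi q) = sg (swap_parity p q r p (+) pi p).
  by rewrite -signr_addb /swap_parity; case: (pi p); case: (pi q); case: (pi r).
by rewrite addrAC [_ + _ - _]addrAC addrK addrAC.
Qed.

Lemma covariant_pow Z p q X k : covariant Z p q X -> covariant Z p q (mxpow X k).
Proof. by move=> cX; elim: k => [|k IH] /=; [exact: covariant1|exact: covariantM]. Qed.

Lemma supertr_comm Z p q X : covariant Z p q X -> Z * supertr X = supertr X * Z.
Proof.
move=> cX; rewrite mulr_sumr mulr_suml.
under eq_bigr => t _ do rewrite -scalerAr cX.
rewrite (eq_bigr (fun t => sg (pi t) *: (X t t * Z)
   + ((q == t)%:R * (sg (pi t) * sg (pi t))) *: X p t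
   - ((p == t)%:R * (sg (pi t) * sg (swap_parity p q t t (+) pi p))) *: X t q)).
  rewrite !big_split /= sumrN big_scale_delta (big_scale_delta (fun t => X t q)).
  rewrite /swap_parity addbb andbF /= -!signr_addb !addbb /= expr0 scale1r addrK.
  by apply: eq_bigr => t _; rewrite scalerAl.
move=> t _; rewrite /swap_parity addbb andbF expr0 scale1r !scalerDr scalerN !scalerA.
by congr (_ + _ *: _ - _ *: _); rewrite mulrCA.
Qed.
End Covariance.

Lemma mxpowSr (A : algType Cplx) K (X : 'M[A]_K) k : mxpow X k.+1 = mxpow X k *m X.
Proof. by elim: k => [|k IH] /=; rewrite ?mul1mx ?mulmx1 // -mulmxA -IH. Qed.

Lemma mxpow_comm (A : algType Cplx) K (X : 'M[A]_K) (x : A) :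
  (forall i j, x * X i j = X i j * x) -> forall k i j, x * mxpow X k i j = mxpow X k i j * x.
Proof.
move=> xX; elim=> [|k IH] i j /=; rewrite !mxE.
  by case: (i == j); rewrite ?mulr1n ?mulr0n ?mulr1 ?mul1r ?mulr0 ?mul0r.
rewrite mulr_sumr mulr_suml; apply: eq_bigr => t _.
by rewrite mulrA xX -!mulrA IH.
Qed.

Lemma supertr_pow_comm (A : algType Cplx) K (pi : 'I_K -> bool) (X : 'M[A]_K) (x : A) :
  (forall i j, x * X i j = X i j * x) ->
  forall k, x * supertr pi (mxpow X k) = supertr pi (mxpow X k) * x.
Proof.
move=> xX k; rewrite mulr_sumr mulr_suml; apply: eq_bigr => t _.
by rewrite -scalerAr (mxpow_comm xX) scalerAl.
Qed.

Section GlRelations.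
Variables (m n : nat) (A : algType Cplx) (e : 'I_(m + n).+1 -> 'I_(m + n).+1 -> A).
Hypothesis He : gl_rel e.
Local Notation N := (m + n).+1.
Local Notation B := (Bmat e).
Local Notation NN := (@ord_max (m + n)).
Local Notation tau := (tau e).

Definition parb (p : 'I_N) : bool := (m <= p)%N.
Local Notation parA p := (parb (widenN p)).

Lemma BmatE p q : B p q = sg (parb p) *: e p q.
Proof. by rewrite mxE mulr_sign_scale. Qed.

Lemma Bmat_covariant p q : covariant parb (B p q) p q B.
Proof.
move=> r s; rewrite !BmatE -!scalerAl -!scalerAr !scalerA.
have R := He p q r s; rewrite /= !mulr_sign_scale !mulr_nat_scale in R.
have sgE : (-1) ^+ ((par m p + par m q) * (par m r + par m s))
    = sg (swap_parity parb p q r s).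
  by rewrite -signr_odd oddM !oddD /par !oddb.
move/eqP: R; rewrite sgE subr_eq => /eqP ->.
rewrite !scalerDr !scalerN !scalerA signr_addb [LHS]addrC addrA.
by congr (_ *: _ + _ *: _ - _ *: _); ring.
Qed.

Lemma Bpow_covariant k p q : covariant parb (B p q) p q (mxpow B k).
Proof. exact/covariant_pow/Bmat_covariant. Qed.

Lemma parb_max : parb NN.
Proof. by rewrite /parb /= leq_addr. Qed.

Lemma widenN_neq_max (p : 'I_(m + n)) : widenN p != NN.
Proof. by rewrite -val_eqE /= ltn_eqF. Qed.

Lemma eq_widenN (p q : 'I_(m + n)) : (widenN p == widenN q) = (p == q).
Proof. by rewrite -!val_eqE. Qed.

Lemma big_ord_widenN (F : 'I_N -> A) : \sum_t F t = \sum_(p < m + n) F (widenN p) + F NN.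
Proof. exact: big_ord_recr. Qed.

Lemma AmatE p q : Amat e p q = B (widenN p) (widenN q).
Proof. by rewrite mxE. Qed.

Lemma IhatE k : Ihat e k = supertr parb (mxpow B k).
Proof. by apply: eq_bigr => t _; rewrite mulr_sign_scale. Qed.

Lemma IcasE k : Icas e k = supertr (fun p => parA p) (mxpow (Amat e) k).
Proof. by apply: eq_bigr => t _; rewrite mulr_sign_scale. Qed.

(* Unlike A, the matrix B with its last row cut out is still covariant, and the
   last column of Bcut^(a+1) is A^a b. *)
Definition Bcut : 'M[A]_N := \matrix_(i, j) if i == NN then 0 else B i j.

Lemma BcutE i j : Bcut i j = if i == NN then 0 else B i j.
Proof. by rewrite mxE. Qed.

Lemma Bcut_pow_covariant k p q :
  p != NN -> q != NN -> covariant parb (B p q) p q (mxpow Bcut k).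
Proof.
move=> pN qN; apply: covariant_pow => r s; rewrite !BcutE (negbTE pN).
have [->|_] := eqVneq r NN; last exact: Bmat_covariant.
by rewrite mulr0 mul0r scaler0 add0r (negbTE qN) mul0r scale0r scaler0 subr0.
Qed.

Lemma Bcut_powS_max k j : mxpow Bcut k.+1 NN j = 0.
Proof. by rewrite /= mxE big1 // => t _; rewrite BcutE eqxx mul0r. Qed.

Lemma Bcut_pow_max k j : j != NN -> mxpow Bcut k NN j = 0.
Proof.
by case: k => [|k] jN; rewrite ?Bcut_powS_max // /= mxE eq_sym (negbTE jN).
Qed.

Lemma Bcut_pow_widenN k p q : mxpow Bcut k (widenN p) (widenN q) = mxpow (Amat e) k p q.
Proof.
elim: k p q => [|k IH] p q /=; rewrite !mxE ?eq_widenN //.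
rewrite big_ord_widenN Bcut_pow_max ?widenN_neq_max // mulr0 addr0.
by apply: eq_bigr => r _; rewrite IH BcutE (negbTE (widenN_neq_max p)) AmatE.
Qed.

Definition Acol a p := mxpow Bcut a.+1 (widenN p) NN.
Definition Brow p := B NN (widenN p).
Definition Bpow_row i p := mxpow B i NN (widenN p).
Definition Bpow_col k p := mxpow B k (widenN p) NN.

Lemma AcolE a p : Acol a p = \sum_q mxpow (Amat e) a p q * B (widenN q) NN.
Proof.
rewrite /Acol mxpowSr mxE big_ord_widenN BcutE eqxx mulr0 addr0.
by apply: eq_bigr => q _; rewrite Bcut_pow_widenN BcutE (negbTE (widenN_neq_max q)).
Qed.

Lemma Acol0 p : Acol 0 p = B (widenN p) NN.
Proof. by rewrite /Acol /= mulmx1 BcutE (negbTE (widenN_neq_max p)). Qed.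

Lemma AcolS a p : Acol a.+1 p = \sum_q Amat e p q * Acol a q.
Proof.
rewrite /Acol [mxpow Bcut a.+2]/= mxE big_ord_widenN Bcut_powS_max mulr0 addr0.
by apply: eq_bigr => q _; rewrite BcutE (negbTE (widenN_neq_max p)) AmatE.
Qed.

Lemma tau0 : tau 0 = 1.
Proof. by rewrite /tau /= mxE eqxx. Qed.

Lemma tau1 : tau 1 = B NN NN.
Proof. by rewrite /tau /= mulmx1. Qed.

Lemma Bpow_row0 p : Bpow_row 0 p = 0.
Proof. by rewrite /Bpow_row /= mxE eq_sym (negbTE (widenN_neq_max p)). Qed.

Lemma Bpow_row1 p : Bpow_row 1 p = Brow p.
Proof. by rewrite /Bpow_row /= mulmx1. Qed.

Lemma Bpow_rowS i p : Bpow_row i.+1 p = \sum_q Bpow_row i q * Amat e q p + tau i * Brow p.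
Proof.
rewrite /Bpow_row mxpowSr mxE big_ord_widenN; congr (_ + _).
by apply: eq_bigr => q _; rewrite AmatE.
Qed.

Lemma Bpow_colE k p : Bpow_col k p = \sum_(a < k) Acol a p * tau (k.-1 - a).
Proof.
elim: k p => [|k IH] p; first by rewrite /Bpow_col /= mxE (negbTE (widenN_neq_max p)) big_ord0.
rewrite /Bpow_col [mxpow B k.+1]/= mxE big_ord_widenN big_ord_recl /= subn0 Acol0 addrC.
congr (_ + _); under eq_bigr => q _ do rewrite -/(Bpow_col k q) IH mulr_sumr.
rewrite exchange_big /=; apply: eq_bigr => a _.
rewrite AcolS mulr_suml subnS; apply: eq_bigr => q _.
by rewrite AmatE mulrA -!subn1 subnAC.
Qed.

Lemma Brow_tau p k : Brow p * tau k = tau k * Brow p + Bpow_row k p.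
Proof.
rewrite /Brow /tau Bpow_covariant (negbTE (widenN_neq_max p)) mul0r scale0r addr0.
rewrite eqxx mul1r /swap_parity parb_max addbb andbF expr0 scale1r expr1 scaleN1r.
by rewrite opprK.
Qed.

Lemma Bpow_row_Amat i p q : Bpow_row i q * Amat e q p =
  sg (swap_parity parb (widenN q) (widenN p) NN (widenN q)) *: (Amat e q p * Bpow_row i q)
  + sg (parA q) *: Bpow_row i p.
Proof.
have := Bpow_covariant i (widenN q) (widenN p) NN (widenN q).
rewrite (negbTE (widenN_neq_max p)) mul0r scale0r addr0 eqxx mul1r => cov.
rewrite !AmatE /Bpow_row cov scalerBr !scalerA -!signr_addb addbb scale1r.
by rewrite addbA addbb subrK.
Qed.

Lemma Acol_Amat a p q : Acol a p * Amat e q p =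
  sg (swap_parity parb (widenN q) (widenN p) (widenN p) NN) *:
    (Amat e q p * Acol a p - sg (parA p) *: Acol a q).
Proof.
have := Bcut_pow_covariant a.+1 (widenN_neq_max q) (widenN_neq_max p) (widenN p) NN.
rewrite eqxx mul1r (negbTE (widenN_neq_max q)) mul0r scale0r subr0 => cov.
by rewrite !AmatE /Acol cov addrK scalerA -signr_addb addbb scale1r.
Qed.

Definition kappa a i := \sum_p sg (parA p) *: (Acol a p * Bpow_row i p).

Lemma kappa0 a : kappa a 0 = 0.
Proof. by rewrite /kappa big1 // => p _; rewrite Bpow_row0 mulr0 scaler0. Qed.

Lemma sum_Acol_tau_Brow a j :
  \sum_p sg (parA p) *: (Acol a p * (tau j * Brow p)) = kappa a 1 * tau j - kappa a j.
Proof.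
have Btau p : tau j * Brow p = Brow p * tau j - Bpow_row j p by rewrite Brow_tau addrK.
under eq_bigr => p _ do rewrite Btau mulrBr mulrA scalerBr.
rewrite sumrB /kappa mulr_suml; congr (_ - _); apply: eq_bigr => p _.
by rewrite Bpow_row1 scalerAl.
Qed.

(* Moving A across A^a b and across (B^i)^N produces two copies of
   (m - n) * kappa a i, which cancel. *)
Lemma sum_Acol_Bpow_row_Amat a i :
  \sum_p sg (parA p) *: (Acol a p * \sum_q Bpow_row i q * Amat e q p) = kappa a.+1 i.
Proof.
set sdimA : Cplx := \sum_(q < m + n) sg (parA q).
transitivity (\sum_p \sum_q (sg (parA q) *: (Amat e q p * Acol a p * Bpow_row i q)
    - (sg (parA p) * sg (parA q)) *: (Acol a q * Bpow_row i q)
    + (sg (parA p) * sg (parA q)) *: (Acol a p * Bpow_row i p))).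
  apply: eq_bigr => p _; rewrite mulr_sumr scaler_sumr; apply: eq_bigr => q _.
  rewrite Bpow_row_Amat mulrDr -scalerAr mulrA Acol_Amat.
  rewrite -!scalerAl mulrBl -scalerAl -scalerAr !scalerDr ?scalerN !scalerA.
  congr (_ *: _ - _ *: _ + _ *: _); rewrite -!signr_addb; congr (sg _);
  by rewrite /swap_parity parb_max; case: (parA p); case: (parA q).
under eq_bigr => p _ do rewrite !big_split /= sumrN.
rewrite !big_split /= sumrN.
have -> : \sum_p \sum_q (sg (parA p) * sg (parA q)) *: (Acol a p * Bpow_row i p)
    = sdimA *: kappa a i.
  rewrite /kappa scaler_sumr; apply: eq_bigr => p _.
  by rewrite scaler_suml; apply: eq_bigr => q _; rewrite scalerA mulrC.
have -> : \sum_p \sum_q (sg (parA p) * sg (parA q)) *: (Acol a q * Bpow_row i q)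
    = sdimA *: kappa a i.
  rewrite /kappa scaler_suml; apply: eq_bigr => p _.
  by rewrite scaler_sumr; apply: eq_bigr => q _; rewrite scalerA.
rewrite subrK exchange_big /= /kappa; apply: eq_bigr => q _.
by rewrite -scaler_sumr AcolS -!mulr_suml.
Qed.

Lemma kappaS a i : kappa a i.+1 = kappa a.+1 i + kappa a 1 * tau i - kappa a i.
Proof.
rewrite {1}/kappa; under eq_bigr => p _ do rewrite Bpow_rowS mulrDr scalerDr.
by rewrite big_split /= sum_Acol_Bpow_row_Amat sum_Acol_tau_Brow addrA.
Qed.

Definition sdim : Cplx := \sum_(t < N) sg (parb t).

Lemma tauS_supertr k : \sum_p sg (parA p) *: (Bpow_col k p * Brow p) + tau k.+1
   = tau k * tau 1 + sdim *: tau k - Ihat e k.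
Proof.
have cov t : B NN t * mxpow B k t NN = - (sg (parb t) *: (mxpow B k t NN * B NN t))
    + sg (parb t) *: tau k - sg (parb t) *: mxpow B k t t.
  rewrite Bpow_covariant !eqxx !mul1r -[- (_ *: (_ * B NN t))]scaleNr.
  congr (_ *: _ + _ *: _ - _ *: _); rewrite /swap_parity parb_max.
    by case: (parb t); rewrite /= ?expr0 ?expr1 ?opprK.
  by case: (parb t).
rewrite {1}/tau [mxpow B k.+1]/= mxE (eq_bigr _ (fun t _ => cov t)) !big_split /=.
rewrite !sumrN -scaler_suml IhatE big_ord_widenN parb_max /= expr1 scaleN1r -tau1.
by rewrite opprB addrA addrA subrKC.
Qed.

Lemma Bpow_widenN k p q : mxpow B k (widenN p) (widenN q)
   = mxpow (Amat e) k p q + \sum_(a < k) Acol a p * Bpow_row (k.-1 - a) q.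
Proof.
elim: k p q => [|k IH] p q; first by rewrite /= !mxE eq_widenN big_ord0 addr0.
rewrite [mxpow B k.+1]/= [(B *m _) _ _]mxE big_ord_widenN.
rewrite [mxpow (Amat e) k.+1]/= [(Amat e *m _) _ _]mxE big_ord_recl /= Acol0.
rewrite [B _ NN * _ + _]addrC addrA.
under eq_bigr => r _ do rewrite IH mulrDr.
rewrite big_split /=; congr (_ + _ + _).
- by apply: eq_bigr => r _; rewrite AmatE.
- under eq_bigr => r _ do rewrite mulr_sumr.
  rewrite exchange_big /=; apply: eq_bigr => a _.
  rewrite AcolS mulr_suml; apply: eq_bigr => r _.
  by rewrite AmatE mulrA /bump leq0n add1n subnS -!subn1 subnAC.
- by rewrite subn0.
Qed.

Lemma Ihat_sub_Icas k : Ihat e k - Icas e k + tau k = \sum_(a < k) kappa a (k.-1 - a).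
Proof.
rewrite IhatE IcasE /supertr big_ord_widenN parb_max /= expr1 scaleN1r.
under eq_bigr => p _ do rewrite Bpow_widenN scalerDr.
rewrite big_split /= addrAC subrK addrC addKr /kappa.
under eq_bigr => p _ do rewrite scaler_sumr.
by rewrite exchange_big.
Qed.

Lemma sum_kappa1_tau k : \sum_(a < k) kappa a 1 * tau (k.-1 - a) + tau k.+1
   = tau k * tau 1 + (sdim + 1) *: tau k - Icas e k.
Proof.
have E : \sum_(a < k) kappa a 1 * tau (k.-1 - a)
    = \sum_p sg (parA p) *: (Bpow_col k p * Brow p) + \sum_(a < k) kappa a (k.-1 - a).
  apply/eqP; rewrite -subr_eq -sumrB eq_sym; apply/eqP.
  under eq_bigr => p _ do rewrite Bpow_colE mulr_suml scaler_sumr.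
  rewrite exchange_big /=; apply: eq_bigr => a _.
  by rewrite -sum_Acol_tau_Brow; apply: eq_bigr => p _; rewrite mulrA.
rewrite E -Ihat_sub_Icas addrAC tauS_supertr [Ihat e k - _ + _]addrAC.
by rewrite -[Ihat e k + _ - _]addrA subrKA scalerDl scale1r !addrA.
Qed.

Lemma tauS_sigma k : tau k.+1 = tau 1 * tau k + \sum_(a < k) sigma e a * tau (k.-1 - a).
Proof.
rewrite {1}/tau [mxpow B k.+1]/= mxE big_ord_widenN addrC tau1; congr (_ + _).
under eq_bigr => p _ do rewrite -/(Bpow_col k p) Bpow_colE mulr_sumr.
rewrite exchange_big /=; apply: eq_bigr => a _; rewrite mulr_suml.
apply: eq_bigr => p _; rewrite AcolE !mulr_suml mulr_sumr; apply: eq_bigr => q _.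
by rewrite !mulrA.
Qed.

Lemma Ihat_comm_Bmat k p q : Ihat e k * B p q = B p q * Ihat e k.
Proof. by rewrite IhatE; apply/esym/supertr_comm/Bpow_covariant. Qed.

Lemma Icas_comm_Amat k p q : Icas e k * Amat e p q = Amat e p q * Icas e k.
Proof.
have := supertr_comm (Bcut_pow_covariant k (widenN_neq_max p) (widenN_neq_max q)).
rewrite /supertr big_ord_widenN parb_max /= expr1 scaleN1r.
under eq_bigr => t _ do rewrite Bcut_pow_widenN.
rewrite -/(supertr _ (mxpow (Amat e) k)) -IcasE AmatE mulrBr mulrBl.
suff -> : B (widenN p) (widenN q) * mxpow Bcut k NN NN
    = mxpow Bcut k NN NN * B (widenN p) (widenN q) by move/addIr/esym.
case: k => [|k]; last by rewrite Bcut_powS_max mulr0 mul0r.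
by rewrite /= [1%:M _ _]mxE eqxx mulr1 mul1r.
Qed.

Lemma casvars_comm K (i j : 'I_(K + K)) :
  casvars e i * casvars e j = casvars e j * casvars e i.
Proof.
rewrite /casvars; case: (split i) => a; case: (split j) => b.
- by rewrite [Icas e b]IcasE; apply/supertr_pow_comm/Icas_comm_Amat.
- by apply/esym; rewrite IcasE; apply: supertr_pow_comm => p q; rewrite AmatE Ihat_comm_Bmat.
- by rewrite IcasE; apply: supertr_pow_comm => p q; rewrite AmatE Ihat_comm_Bmat.
- by rewrite [Ihat e b]IhatE; apply/supertr_pow_comm/Ihat_comm_Bmat.
Qed.
End GlRelations.

Section PairwiseCommutingEvaluation.
Variables (A : algType Cplx) (K : nat) (h : 'I_K -> A).
Hypothesis hC : forall i j, h i * h j = h j * h i.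

Lemma mpevalE P : mpeval P h = mmap (in_alg A) h P.
Proof. by apply: eq_bigr => mo _; rewrite mulr_algl. Qed.

Lemma mmap1D_comm m1 m2 : mmap1 h (m1 + m2)%MM = mmap1 h m1 * mmap1 h m2.
Proof.
rewrite /mmap1; under eq_bigr => i _ do rewrite mnmDE exprD.
by apply: prodrM_comm => i j _ _; apply/commrX/commr_sym/commrX.
Qed.

Lemma mpevalM P Q : mpeval (P * Q) h = mpeval P h * mpeval Q h.
Proof.
rewrite !mpevalE; pose_big_enough i.
  rewrite (mpolywME (k := i)) // raddf_sum /= !(mmapE i) //.
  rewrite big_distrlr /= pair_bigA; apply/eq_bigr => -[j1 j2] _ /=.
  rewrite mmapZ mmapX mmap1D_comm /= !mulr_algl -scalerAl -scalerAr scalerA.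
  by rewrite mulrC.
by close.
Qed.

Lemma mpevalD P Q : mpeval (P + Q) h = mpeval P h + mpeval Q h.
Proof. by rewrite !mpevalE mmapD. Qed.

Lemma mpevalN P : mpeval (- P) h = - mpeval P h.
Proof. by rewrite !mpevalE mmapN. Qed.

Lemma mpevalZ c P : mpeval (c *: P) h = c *: mpeval P h.
Proof. by rewrite !mpevalE mmapZ /= mulr_algl. Qed.

Lemma mpevalC c : mpeval c%:MP h = c%:A.
Proof. by rewrite mpevalE mmapC. Qed.

Lemma mpevalX i : mpeval 'X_i h = h i.
Proof. by rewrite mpevalE mmapX mmap1U. Qed.
End PairwiseCommutingEvaluation.

Section CasimirPolynomials.
Variables (m n K : nat).

(* An element of U(gl(m|n+1)), given uniformly in every algebra A with a family
   e satisfying the defining relations. *)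
Definition glfun := forall A : algType Cplx, ('I_(m + n).+1 -> 'I_(m + n).+1 -> A) -> A.

Definition casimir_poly (F : glfun) := exists P : {mpoly Cplx[K + K]},
  forall (A : algType Cplx) (e : 'I_(m + n).+1 -> 'I_(m + n).+1 -> A),
    gl_rel e -> F A e = mpeval P (@casvars m n A e K).

Lemma casimir_poly_ext (G F : glfun) :
  casimir_poly G -> (forall A e, gl_rel e -> F A e = G A e) -> casimir_poly F.
Proof. by move=> [P HP] FG; exists P => A e He; rewrite FG // HP. Qed.

Lemma casimir_poly_const c : casimir_poly (fun A e => c%:A).
Proof. by exists c%:MP => A e He; rewrite mpevalC. Qed.

Lemma casimir_polyD F G :
  casimir_poly F -> casimir_poly G -> casimir_poly (fun A e => F A e + G A e).
Proof. by move=> [P HP] [Q HQ]; exists (P + Q) => A e He; rewrite mpevalD HP // HQ. Qed.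

Lemma casimir_polyN F : casimir_poly F -> casimir_poly (fun A e => - F A e).
Proof. by move=> [P HP]; exists (- P) => A e He; rewrite mpevalN HP. Qed.

Lemma casimir_polyB F G :
  casimir_poly F -> casimir_poly G -> casimir_poly (fun A e => F A e - G A e).
Proof. by move=> cF cG; apply/casimir_polyD/casimir_polyN. Qed.

Lemma casimir_polyM F G :
  casimir_poly F -> casimir_poly G -> casimir_poly (fun A e => F A e * G A e).
Proof.
move=> [P HP] [Q HQ]; exists (P * Q) => A e He.
by rewrite mpevalM ?HP ?HQ //; apply: casvars_comm.
Qed.

Lemma casimir_polyZ c F : casimir_poly F -> casimir_poly (fun A e => c *: F A e).
Proof. by move=> [P HP]; exists (c *: P) => A e He; rewrite mpevalZ HP. Qed.

Lemma casimir_polyZK c F :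
  c != 0 -> casimir_poly (fun A e => c *: F A e) -> casimir_poly F.
Proof.
move=> c0 /(casimir_polyZ c^-1) cF; apply: (casimir_poly_ext cF) => A e _.
by rewrite scalerA mulVf ?scale1r.
Qed.

Lemma casimir_poly_sum k (F : 'I_k -> glfun) :
  (forall a, casimir_poly (F a)) -> casimir_poly (fun A e => \sum_a F a A e).
Proof.
elim: k F => [|k IH] F cF.
  by apply: (casimir_poly_ext (casimir_poly_const 0)) => A e _; rewrite big_ord0 scale0r.
apply: (casimir_poly_ext (casimir_polyD (IH _ (fun a => cF (widen_ord (leqnSn k) a)))
  (cF ord_max))) => A e _.
by rewrite big_ord_recr.
Qed.

Lemma casimir_poly_Icas j : (j < K)%N -> casimir_poly (fun A e => Icas e j).
Proof.
move=> jK; exists 'X_(lshift K (Ordinal jK)) => A e He.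
by rewrite mpevalX /casvars (unsplitK (inl _)).
Qed.

Lemma casimir_poly_Ihat j : (j < K)%N -> casimir_poly (fun A e => Ihat e j).
Proof.
move=> jK; exists 'X_(rshift K (Ordinal jK)) => A e He.
by rewrite mpevalX /casvars (unsplitK (inr _)).
Qed.
End CasimirPolynomials.

Arguments casimir_poly_const {m n K}.
Arguments casimir_poly_Icas {m n K j}.
Arguments casimir_poly_Ihat {m n K j}.

Section Recursion.
Variables (m n K : nat).
Local Notation cp := (@casimir_poly m n K).

Definition casimir_tower k :=
  (forall j, (j <= k)%N -> cp (fun A e => tau e j)) /\
  (forall a, (a.+2 <= k)%N -> cp (fun A e => kappa e a 1)).

Section Step.
Variable k : nat.
Hypotheses (kK : (k.+1 < K)%N) (tower_k : casimir_tower k).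

Lemma kappa_low a i : (a + i < k)%N -> cp (fun A e => kappa e a i).
Proof.
have [ctau ckappa] := tower_k.
elim: i a => [|i IH] a ai.
  by apply: (casimir_poly_ext (casimir_poly_const 0)) => A e _; rewrite kappa0 scale0r.
apply: (casimir_poly_ext (casimir_polyB (casimir_polyD (IH a.+1 _)
  (casimir_polyM (ckappa a _) (ctau i _))) (IH a _))); try lia.
by move=> A e He; rewrite (kappaS He).
Qed.

Lemma kappa_diag a i :
  (a + i.+1 = k)%N -> cp (fun A e => kappa e a i.+1 - kappa e k.-1 1).
Proof.
have [ctau ckappa] := tower_k.
elim: i a => [|i IH] a ai.
  have -> : a = k.-1 by lia.
  by apply: (casimir_poly_ext (casimir_poly_const 0)) => A e _; rewrite subrr scale0r.
apply: (casimir_poly_ext (casimir_polyB (casimir_polyD (IH a.+1 _)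
  (casimir_polyM (ckappa a _) (ctau i.+1 _))) (@kappa_low a i.+1 _))); try lia.
by move=> A e He; rewrite (kappaS He) addrAC; congr (_ - _); exact: addrAC.
Qed.

Lemma tau_sub_kappa : cp (fun A e => tau e k.+1 - k%:R *: kappa e k.-1 1).
Proof.
have cS : cp (fun A e => \sum_(a < k) (kappa e a (k - a) - kappa e k.-1 1)).
  apply: casimir_poly_sum => a; have ak := ltn_ord a.
  have -> : (k - a = (k - a).-1.+1)%N by lia.
  by apply: kappa_diag; lia.
have cI : cp (fun A e => Ihat e k.+1 - Icas e k.+1).
  by apply: casimir_polyB; [apply: casimir_poly_Ihat|apply: casimir_poly_Icas].
apply: (casimir_poly_ext (casimir_polyB cS cI)) => A e _.
have := Ihat_sub_Icas e k.+1; rewrite big_ord_recr /= subnn kappa0 addr0.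
rewrite sumrB sumr_const card_ord scaler_nat => <-.
by rewrite addrAC [Ihat e _ - _ + _]addrC addrK.
Qed.

Lemma kappa_add_tau : (0 < k)%N -> cp (fun A e => kappa e k.-1 1 + tau e k.+1).
Proof.
have [ctau ckappa] := tower_k.
move=> k0; have [k' kE] : exists k', k = k'.+1 by exists k.-1; lia.
rewrite kE /=.
have cR : cp (fun A e =>
    tau e k'.+1 * tau e 1 + (sdim m n + 1) *: tau e k'.+1 - Icas e k'.+1).
  apply: casimir_polyB; last by apply: casimir_poly_Icas; lia.
  by apply: casimir_polyD; [apply: casimir_polyM|apply: casimir_polyZ]; apply: ctau; lia.
have cS : cp (fun A e => \sum_(a < k') kappa e a 1 * tau e (k' - a)).
  apply: casimir_poly_sum => a; have ak := ltn_ord a.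
  by apply: casimir_polyM; [apply: ckappa|apply: ctau]; lia.
apply: (casimir_poly_ext (casimir_polyB cR cS)) => A e He.
rewrite -(sum_kappa1_tau He k'.+1) big_ord_recr /= subnn tau0 mulr1.
by rewrite -[_ + _ + tau e _]addrA [RHS]addrC addKr.
Qed.

Lemma casimir_tower_succ : casimir_tower k.+1.
Proof.
have [ctau ckappa] := tower_k.
have ctauS : cp (fun A e => tau e k.+1).
  case: (posnP k) => [k0|kpos].
    by apply: (casimir_poly_ext tau_sub_kappa) => A e _; rewrite k0 scale0r subr0.
  (* (k+1) tau_(k+1) = k (kappa_(k-1,1) + tau_(k+1)) + (tau_(k+1) - k kappa_(k-1,1)) *)
  apply: (casimir_polyZK (c := k.+1%:R)); first by rewrite pnatr_eq0.
  apply: (casimir_poly_ext (casimir_polyD (casimir_polyZ k%:R (kappa_add_tau kpos))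
    tau_sub_kappa)) => A e _.
  by rewrite scalerDr [_ + _ *: tau e _]addrC -addrA subrKC mulrSr scalerDl scale1r.
split=> [j|a].
  by rewrite leq_eqVlt ltnS => /orP[/eqP->|/ctau].
rewrite ltnS leq_eqVlt => /orP[/eqP ak|/ckappa //].
have -> : a = k.-1 by lia.
apply: (casimir_poly_ext (casimir_polyB (kappa_add_tau _) ctauS)); first by lia.
by move=> A e _; rewrite addrK.
Qed.
End Step.
End Recursion.

Lemma casimir_tower0 m n K : casimir_tower m n K 0.
Proof.
split=> [j|//]; rewrite leqn0 => /eqP->.
by apply: (casimir_poly_ext (casimir_poly_const 1)) => A e _; rewrite tau0 scale1r.
Qed.

Lemma casimir_tower_lt m n K k : (k < K)%N -> casimir_tower m n K k.
Proof.
elim: k => [|k IH] kK; first exact: casimir_tower0.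
by apply: casimir_tower_succ => //; apply: IH; lia.
Qed.

Lemma casimir_poly_sigma m n K l :
  (l.+2 < K)%N -> casimir_poly K (fun A (e : 'I_(m + n).+1 -> _ -> A) => sigma e l).
Proof.
move=> lK; have [ctau _] := casimir_tower_lt m n lK.
suff csigma j :
    (j <= l)%N -> casimir_poly K (fun A (e : 'I_(m + n).+1 -> _ -> A) => sigma e j).
  exact: csigma.
elim/ltn_ind: j => j IH jl.
have cS : casimir_poly K (fun A (e : 'I_(m + n).+1 -> _ -> A) =>
    \sum_(a < j) sigma e a * tau e (j - a)).
  apply: casimir_poly_sum => a; have aj := ltn_ord a.
  by apply: casimir_polyM; [apply: IH|apply: ctau]; lia.
apply: (casimir_poly_ext (casimir_polyB (casimir_polyB (ctau j.+2 _)
  (casimir_polyM (ctau 1 _) (ctau j.+1 _))) cS)); try lia.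
move=> A e _; rewrite (tauS_sigma e j.+1) big_ord_recr /= subnn tau0 mulr1.
by rewrite [tau e 1 * _ + _]addrC addrK [RHS]addrC addKr.
Qed.

Theorem theorem15 (m n : nat) :
  (forall k : nat, exists P : {mpoly Cplx[k.+1 + k.+1]},
     forall (A : algType Cplx) (e : 'I_(m + n).+1 -> 'I_(m + n).+1 -> A),
       gl_rel e -> tau e k = mpeval P (@casvars m n A e _))
  /\
  (forall l : nat, exists P : {mpoly Cplx[l.+3 + l.+3]},
     forall (A : algType Cplx) (e : 'I_(m + n).+1 -> 'I_(m + n).+1 -> A),
       gl_rel e -> sigma e l = mpeval P (@casvars m n A e _)).
Proof.
split=> [k|l]; last exact: casimir_poly_sigma.
by have [ctau _] := casimir_tower_lt m n (ltnSn k); apply: ctau.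
Qed.
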